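(* Let $w\ge 0$ and let $\mathcal{B}$ be a class of graphs such that $\operatorname{tw}(L(B))\le w$ for every $B\in\mathcal{B}$. Let $\mathcal{C}$ be the class of graphs obtained from graphs in $\mathcal{B}$ by successively applying the bridge operation, i.e., the smallest class containing $\mathcal{B}$ such that whenever $G_1,G_2\in\mathcal{C}$ (taken vertex-disjoint) and $v_1\in V(G_1)$, $v_2\in V(G_2)$ have neighborhoods $N(v_1)=\{x_1,y_1,z_1\}$, $N(v_2)=\{x_2,y_2,z_2\}$, the graph $(G_1-v_1)\cup(G_2-v_2)+x_1x_2+y_1y_2+z_1z_2$ belongs to $\mathcal{C}$. Then every $G\in\mathcal{C}$ satisfies $\operatorname{tw}(G)\le 2w+1$.
   Context: $\operatorname{tw}(H)$ denotes the treewidth of a graph $H$. The line graph $L(F)$ of a graph $F$ is the graph with vertex set $E(F)$ in which two vertices are adjacent exactly when the corresponding edges share an endvertex in $F$. *)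

From HB Require Import structures.
From mathcomp Require Import all_boot.

Set Implicit Arguments.
Unset Strict Implicit.
Unset Printing Implicit Defensive.

Record sgraph := SGraph {
  vtx : finType;
  adj : rel vtx;
  adj_sym : symmetric adj;
  adj_irr : irreflexive adj }.
Arguments adj : clear implicits.

Definition is_tree (I : finType) (t : rel I) : Prop :=
  [/\ 0 < #|I|, symmetric t, irreflexive t,
      forall a b : I, connect t a b &
      forall s : seq I, uniq s -> 2 < size s -> ~~ cycle t s].

Definition tw_le (G : sgraph) (k : nat) : Prop :=
  exists (I : finType) (t : rel I) (bag : I -> {set vtx G}),
    [/\ is_tree t,
        forall x : vtx G, exists i, x \in bag i,
        forall x y : vtx G, adj G x y -> exists i, (x \in bag i) && (y \in bag i),
        forall (x : vtx G) (i j : I), x \in bag i -> x \in bag j ->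
          connect [rel a b | [&& t a b, x \in bag a & x \in bag b]] i j &
        forall i, #|bag i| <= k.+1].

Definition is_edge (G : sgraph) (e : {set vtx G}) : bool :=
  [exists x, exists y, adj G x y && (e == [set x; y])].

Arguments is_edge : clear implicits.

Definition ledge (G : sgraph) := {e : {set vtx G} | is_edge G e}.

Definition line_adj (G : sgraph) : rel (ledge G) :=
  fun e f => (e != f) && (val e :&: val f != set0).

Lemma line_adj_sym (G : sgraph) : symmetric (@line_adj G).
Proof. by move=> e f; rewrite /line_adj eq_sym setIC. Qed.

Lemma line_adj_irr (G : sgraph) : irreflexive (@line_adj G).
Proof. by move=> e; rewrite /line_adj eqxx. Qed.

Definition line_graph (G : sgraph) : sgraph :=
  @SGraph (ledge G) (@line_adj G) (@line_adj_sym G) (@line_adj_irr G).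

Section Bridge.
Variables (G1 G2 : sgraph) (v1 : vtx G1) (v2 : vtx G2)
          (x1 y1 z1 : vtx G1) (x2 y2 z2 : vtx G2).

Definition bvtx : finType :=
  ({x : vtx G1 | x != v1} + {x : vtx G2 | x != v2})%type.

Definition cross (a : vtx G1) (b : vtx G2) : bool :=
  [|| (a == x1) && (b == x2), (a == y1) && (b == y2) | (a == z1) && (b == z2)].

Definition badj : rel bvtx := fun u w =>
  match u, w with
  | inl a, inl b => adj G1 (val a) (val b)
  | inr a, inr b => adj G2 (val a) (val b)
  | inl a, inr b => cross (val a) (val b)
  | inr a, inl b => cross (val b) (val a)
  end.

Lemma badj_sym : symmetric badj.
Proof. by case=> a [] b //=; apply: adj_sym. Qed.

Lemma badj_irr : irreflexive badj.
Proof. by case=> a /=; rewrite adj_irr. Qed.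

Definition bridge : sgraph := @SGraph bvtx badj badj_sym badj_irr.
End Bridge.

Definition nbhd3 (G : sgraph) (v x y z : vtx G) : Prop :=
  [set u | adj G v u] = [set x; y; z] /\ uniq [:: x; y; z].

Inductive bridge_closure (B : sgraph -> Prop) : sgraph -> Prop :=
| bc_base G : B G -> bridge_closure B G
| bc_bridge (G1 G2 : sgraph) (v1 : vtx G1) (v2 : vtx G2)
    (x1 y1 z1 : vtx G1) (x2 y2 z2 : vtx G2) :
    bridge_closure B G1 -> bridge_closure B G2 ->
    nbhd3 v1 x1 y1 z1 -> nbhd3 v2 x2 y2 z2 ->
    bridge_closure B (bridge v1 v2 x1 y1 z1 x2 y2 z2).

(* A tree decomposition of width w of the line graph L(H) is a tree
   decomposition whose bags hold edges of H; replacing every edge by its two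
   ends gives a tree decomposition of H with bags of at most 2(w + 1) vertices.
   We therefore carry along the bridge operation a decomposition of this kind
   for a family of "pseudo-edges" with at most two ends covering the edges of G.
   In a bridge, the three edges at v1 lie in a common bag by the Helly property
   of subtrees, and likewise at v2.  Linking the two decomposition trees by an
   edge between these bags and merging v1x1 with v2x2 into x1x2 (and likewise
   for y and z) decomposes the bridge; the remaining edges at v1 and v2 become
   half-edges. *)

From mathcomp Require Import all_boot zify.

Set Implicit Arguments.
Unset Strict Implicit.
Unset Printing Implicit Defensive.

Lemma connect_homo (T U : finType) (r : rel T) (r' : rel U) (f : T -> U) :
  {homo f : x y / r x y >-> r' x y} ->
  {homo f : x y / connect r x y >-> connect r' x y}.
Proof.
move=> fr x _ /connectP [p rp ->]; elim: p x rp => [|y p IH] x /=.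
  by rewrite connect0.
by case/andP=> /fr rxy /IH; apply: connect_trans (connect1 rxy).
Qed.

Lemma leq_card_bigcup (T E : finType) (S : {set E}) (F : E -> {set T}) :
  #|\bigcup_(e in S) F e| <= \sum_(e in S) #|F e|.
Proof.
elim/big_ind2: _ => [|A m B n leA leB|//]; first by rewrite cards0.
by apply: leq_trans (leq_add leA leB); apply: leq_card_setU.
Qed.

Lemma leq_card_in_set (T U : finType) (A : {set T}) (B : {set U}) (f : T -> U) :
  {in A &, injective f} -> {in A, forall x, f x \in B} -> #|A| <= #|B|.
Proof.
move=> f_inj fAB; rewrite -(card_in_imset f_inj); apply/subset_leq_card/subsetP.
by move=> _ /imsetP [x xA ->]; exact: fAB.
Qed.

Lemma set2_other (T : finType) (v a c : T) : c \in [set v; a] -> c != v -> c = a.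
Proof. by rewrite !inE => /orP [/eqP -> /eqP|/eqP]. Qed.

Lemma card_le2_set2 (T : finType) (S : {set T}) a b :
  #|S| <= 2 -> a \in S -> b \in S -> a != b -> S = [set a; b].
Proof.
move=> card_S aS bS neq_ab; apply/esym/eqP; rewrite eqEcard cards2 neq_ab card_S andbT.
by apply/subsetP => c; rewrite !inE => /orP [] /eqP ->.
Qed.

Section InducedSubgraphs.
Variables (I : finType) (t : rel I).

Definition induced_rel (A : pred I) : rel I := [rel a b | [&& t a b, A a & A b]].

Definition subtree (A : pred I) :=
  forall i j, A i -> A j -> connect (induced_rel A) i j.

Lemma induced_rel_sym A : symmetric t -> symmetric (induced_rel A).
Proof. by move=> tsym a b; rewrite /induced_rel /= tsym [A a && _]andbC. Qed.

Lemma path_connect_induced A x s :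
  all A (x :: s) -> path t x s -> connect (induced_rel A) x (last x s).
Proof.
move=> As /(sub_in_path (e' := induced_rel A) _ As) p.
by apply: path_connect (p _) _ (mem_last x s) => a b Aa Ab tab; apply/and3P.
Qed.

Lemma induced_path_all A x s : path (induced_rel A) x s -> all A s.
Proof. by elim: s x => //= y s IH x /andP [/and3P [_ _ ->] /IH]. Qed.

Lemma connect_induced_sub (A B : pred I) i j :
  (forall k, A k -> B k) -> connect (induced_rel A) i j -> connect (induced_rel B) i j.
Proof.
move=> AB; apply: connect_sub => a b /and3P [tab Aa Ab].
by apply/connect1/and3P; split=> //; apply: AB.
Qed.

End InducedSubgraphs.

Section Trees.
Variables (I : finType) (t : rel I).
Hypothesis t_tree : is_tree t.

Lemma tree_nbr_sep p a b :
  t p a -> t p b -> a != b -> ~~ connect (induced_rel t (predC1 p)) a b.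
Proof.
have [_ tsym tirr _ acyclic] := t_tree.
move=> tpa tpb neq_ab; apply/negP => /connectP [s0 s0_path b_last].
case/shortenP: s0_path b_last => s s_path uniq_s _ b_last {s0}.
have p_notin_s : p \notin s.
  by apply/negP => /(allP (induced_path_all s_path)); rewrite /= eqxx.
have a_ne_p : a != p by apply: contraTneq tpa => ->; rewrite tirr.
have s_ne_nil : s != [::] by apply: contra_neq neq_ab => s_nil; rewrite b_last s_nil.
have uniq_cyc : uniq (p :: a :: s).
  by rewrite cons_uniq uniq_s in_cons eq_sym negb_or a_ne_p p_notin_s.
have size_cyc : 2 < size (p :: a :: s) by case: (s) s_ne_nil.
move/negP: (acyclic _ uniq_cyc size_cyc); apply.
rewrite /cycle rcons_path /= tpa -b_last tsym tpb andbT.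
by apply: sub_path s_path => x y /and3P [].
Qed.

Lemma subtree_helly (A B C : pred I) p q r :
  subtree t A -> subtree t B -> subtree t C ->
  A p -> B p -> A q -> C q -> B r -> C r -> exists c, [&& A c, B c & C c].
Proof.
have [_ tsym _ _ _] := t_tree.
have avoid_sym p0 := sym_connect_sym (induced_rel_sym (predC1 p0) tsym).
have avoid_conn (P : pred I) p0 a s : path (induced_rel t P) a s -> p0 \notin a :: s ->
    connect (induced_rel t (predC1 p0)) a (last a s).
  move=> as_path p0_notin; apply: path_connect_induced (sub_path _ as_path).
    by apply/allP => x x_in; apply: contraNneq p0_notin => <-.
  by move=> x y /and3P [].
move=> sA sB sC Ap Bp Aq Cq Br Cr.
have [s0 s0_path q_last] := connectP (sA _ _ Ap Aq).
case/shortenP: s0_path q_last => s s_path uniq_s _ q_last {s0}.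
(* Unless C p, the shortest B-path from p to r leaves p through the first
   vertex a of the A-path, as C joins q and r avoiding p; so a is in A and B,
   and closer to q. *)
elim: s p Ap Bp s_path uniq_s q_last => [|a s IH] p Ap Bp s_path uniq_s q_last.
  by rewrite q_last in Cq; exists p; rewrite Ap Bp Cq.
have [Cp|nCp] := boolP (C p); first by exists p; rewrite Ap Bp Cp.
have [u0 u0_path r_last] := connectP (sB _ _ Bp Br).
case/shortenP: u0_path r_last => [[|b u] u_path uniq_u _ r_last {u0}].
  by rewrite r_last /= (negPf nCp) in Cr.
have conn_qr : connect (induced_rel t (predC1 p)) q r.
  by apply: connect_induced_sub (sC _ _ Cq Cr) => x; apply: contraTneq => ->.
case/andP: s_path uniq_s => /and3P [tpa _ Aa] s_path /andP [p_notin uniq_s].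
case/andP: u_path uniq_u => /and3P [tpb _ Bb] u_path /andP [p_notin' _].
have conn_ab : connect (induced_rel t (predC1 p)) a b.
  apply: connect_trans (avoid_conn _ _ _ _ s_path p_notin) _.
  rewrite /= in q_last r_last; rewrite -q_last.
  apply: connect_trans conn_qr _; rewrite avoid_sym r_last.
  exact: avoid_conn u_path p_notin'.
have /eqP eq_ab : a == b by apply: contraTT conn_ab; exact: tree_nbr_sep tpa tpb.
by apply: (IH a) => //; rewrite eq_ab.
Qed.
End Trees.


Section LinkTrees.
Variables (I1 I2 : finType) (t1 : rel I1) (t2 : rel I2) (i1 : I1) (i2 : I2).
Hypotheses (t1_tree : is_tree t1) (t2_tree : is_tree t2).

Definition link_rel : rel (I1 + I2) := fun u v =>
  match u, v with
  | inl a, inl b => t1 a b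
  | inr a, inr b => t2 a b
  | inl a, inr b | inr b, inl a => (a == i1) && (b == i2)
  end.

Definition is_inl (u : I1 + I2) := if u is inl _ then true else false.

Lemma link_rel_sym : symmetric link_rel.
Proof. by have [_ ? _ _ _] := t1_tree; have [_ ? _ _ _] := t2_tree; case=> a [] b /=. Qed.

Lemma link_connected u v : connect link_rel u v.
Proof.
have [_ _ _ conn1 _] := t1_tree; have [_ _ _ conn2 _] := t2_tree.
have conn_l a b : connect link_rel (inl a) (inl b) by apply: connect_homo (conn1 a b).
have conn_r a b : connect link_rel (inr a) (inr b) by apply: connect_homo (conn2 a b).
have conn_lr a b : connect link_rel (inl a) (inr b).
  apply: connect_trans (conn_l a i1) (connect_trans _ (conn_r i2 b)).
  by apply: connect1; rewrite /= !eqxx.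
by case: u v => a [] b //; rewrite (sym_connect_sym link_rel_sym).
Qed.

Lemma link_rel_side u v :
  inl i1 != u -> inl i1 != v -> link_rel u v -> is_inl v = is_inl u.
Proof. by case: u v => [a|b] [a'|b'] //= + + /andP [/eqP eq_a _]; rewrite eq_a eqxx. Qed.

Lemma link_path_side x s :
  inl i1 \notin x :: s -> path link_rel x s -> all (fun y => is_inl y == is_inl x) s.
Proof.
elim: s x => //= y s IH x; rewrite !in_cons !negb_or => /and3P [i1x i1y i1s].
case/andP=> /(link_rel_side i1x i1y) same_side ys.
by rewrite same_side eqxx -same_side IH // in_cons negb_or i1y.
Qed.

Lemma left_acyclic s :
  all is_inl s -> uniq s -> 2 < size s -> ~~ cycle link_rel s.
Proof.
have [_ _ _ _ acyc1] := t1_tree.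
move=> s_left; have -> : s = map inl (pmap (fun u => if u is inl a then Some a else None) s).
  by elim: s s_left => //= -[a|b] s IH //= /IH {1}->.
by rewrite (map_inj_uniq inl_inj) size_map cycle_map; apply: acyc1.
Qed.

Lemma right_acyclic s :
  all (predC is_inl) s -> uniq s -> 2 < size s -> ~~ cycle link_rel s.
Proof.
have [_ _ _ _ acyc2] := t2_tree.
move=> s_right; have -> : s = map inr (pmap (fun u => if u is inr b then Some b else None) s).
  by elim: s s_right => //= -[a|b] s IH //= /IH {1}->.
by rewrite (map_inj_uniq inr_inj) size_map cycle_map; apply: acyc2.
Qed.

Lemma one_side_acyclic x p :
  all (fun y => is_inl y == is_inl x) p -> uniq (x :: p) -> 2 < size (x :: p) ->
  ~~ cycle link_rel (x :: p).
Proof.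
move=> side; case x_left: (is_inl x); [apply: left_acyclic | apply: right_acyclic].
  by rewrite /= x_left; apply: sub_all side => y /eqP ->.
by rewrite /= x_left; apply: sub_all side => y /eqP /= ->; rewrite x_left.
Qed.

Lemma link_acyclic s : uniq s -> 2 < size s -> ~~ cycle link_rel s.
Proof.
move=> uniq_s size_s; apply/negP => cyc.
have [i1_in|i1_notin] := boolP (inl i1 \in s); last first.
  case: s i1_notin uniq_s size_s cyc => // x p i1_notin uniq_s size_s cyc.
  have xp : path link_rel x p by move: (cyc); rewrite /cycle rcons_path => /andP [].
  by rewrite (negPf (one_side_acyclic (link_path_side i1_notin xp) uniq_s size_s)) in cyc.
have [k s' s_rot] := rot_to i1_in.
rewrite -(rot_uniq k) -(size_rot k) -(rot_cycle k) s_rot in uniq_s size_s cyc.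
case: s' s_rot uniq_s size_s cyc => [|y p] // _ uniq_s size_s cyc.
have := cyc; rewrite /cycle rcons_path /= => /andP [/andP [i1y yp] pi1].
have i1_notin : inl i1 \notin y :: p by case/andP: uniq_s.
have side := link_path_side i1_notin yp.
(* Both cycle neighbours of inl i1 lie on the side of y, and on the right
   side they would both be inr i2. *)
have y_left : is_inl y.
  case: p size_s uniq_s cyc yp side pi1 {i1_notin} => [|z p] // _ uniq_s _ _ side /= pi1.
  have /eqP last_side : is_inl (last z p) == is_inl y := allP side _ (mem_last z p).
  apply: contraTT uniq_s => y_right.
  have y_i2 : y = inr i2 by case: y y_right i1y {side last_side} => // b _ /andP [_ /eqP ->].
  rewrite y_i2 /= in last_side *.
  have last_i2 : last z p = inr i2.
    by case: (last z p) last_side pi1 => // c _ /andP [_ /eqP ->].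
  by rewrite -last_i2 mem_last andbF.
suff all_left : all (fun z => is_inl z == is_inl (inl i1 : I1 + I2)) (y :: p).
  by rewrite (negPf (one_side_acyclic all_left uniq_s size_s)) in cyc.
by rewrite /= y_left eqxx; apply: sub_all side => z /eqP ->; rewrite y_left.
Qed.

Lemma link_tree : is_tree link_rel.
Proof.
have [n1 _ irr1 _ _] := t1_tree; have [_ _ irr2 _ _] := t2_tree.
split.
- by rewrite card_sum ltn_addr.
- exact: link_rel_sym.
- by case=> a /=; rewrite ?irr1 ?irr2.
- exact: link_connected.
- exact: link_acyclic.
Qed.

End LinkTrees.

Definition unit_rel : rel unit := fun _ _ => false.

Lemma unit_tree : is_tree unit_rel.
Proof.
split=> //; first by rewrite card_unit.
- by move=> [] [].
- by move=> [|[] [|[] s]] //=; rewrite inE eqxx.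
Qed.

Lemma nbhd3_adj (G : sgraph) (v x y z : vtx G) :
  nbhd3 v x y z -> [/\ adj G v x, adj G v y & adj G v z].
Proof.
case=> N_v _; have in_N u : u \in [set x; y; z] -> adj G v u by rewrite -N_v inE.
by split; apply: in_N; rewrite !inE eqxx ?orbT.
Qed.

Lemma adj_neq (G : sgraph) (x y : vtx G) : adj G x y -> x != y.
Proof. by apply: contraTneq => ->; rewrite adj_irr. Qed.

Lemma adj_is_edge (H : sgraph) (x y : vtx H) : adj H x y -> is_edge H [set x; y].
Proof. by move=> xy; apply/existsP; exists x; apply/existsP; exists y; rewrite xy eqxx. Qed.

(* A tree decomposition of width w of the line graph of a family of
   pseudo-edges of G, vertex sets of size at most two covering the edges of G. *)
Record line_decomp (w : nat) (G : sgraph) := LineDecomp {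
  node : finType;
  tree : rel node;
  pedge : finType;
  ends : pedge -> {set vtx G};
  bag : node -> {set pedge};
  tree_is_tree : is_tree tree;
  card_ends : forall e, #|ends e| <= 2;
  ends_adj : forall x y, adj G x y -> exists e, (x \in ends e) && (y \in ends e);
  bag_meet : forall e f x, x \in ends e -> x \in ends f ->
    exists i, (e \in bag i) && (f \in bag i);
  bag_subtree : forall e, subtree tree (fun i => e \in bag i);
  card_bag : forall i, #|bag i| <= w.+1 }.

Arguments tree {w G} D : rename.
Arguments ends {w G} D e : rename.
Arguments bag {w G} D i : rename.
Arguments tree_is_tree {w G} D : rename.
Arguments card_ends {w G} D e : rename.
Arguments ends_adj {w G} D [x y] : rename.
Arguments card_bag {w G} D i : rename.
Arguments bag_subtree {w G D} e : rename.

Definition covered w G (D : line_decomp w G) : {set vtx G} :=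
  [set x | [exists e, x \in ends D e]].

Lemma bag_of_ends w G (D : line_decomp w G) e x :
  x \in ends D e -> exists i, e \in bag D i.
Proof. by move=> xe; have [i /andP [ei _]] := bag_meet xe xe; exists i. Qed.

Lemma line_decomp_tw w G (D : line_decomp w G) :
  covered D = [set: vtx G] -> tw_le G (2 * w + 1).
Proof.
move=> D_cover; pose bagG i := \bigcup_(e in bag D i) ends D e.
have in_bagG e i x : e \in bag D i -> x \in ends D e -> x \in bagG i.
  by move=> ei xe; apply/bigcupP; exists e.
exists (node D), (tree D), bagG; split; first exact: tree_is_tree.
- move=> x; have : x \in covered D by rewrite D_cover inE.
  rewrite inE => /existsP [e xe].
  by have [i ei] := bag_of_ends xe; exists i; apply: in_bagG ei xe.
- move=> x y /(ends_adj D) [e /andP [xe ye]]; have [i ei] := bag_of_ends xe.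
  by exists i; rewrite !(in_bagG e).
- move=> x i j /bigcupP [e ei xe] /bigcupP [f fj xf].
  have [k /andP [ek fk]] := bag_meet xe xf.
  apply: connect_trans (connect_induced_sub _ (bag_subtree e _ _ ei ek)) _.
    by move=> a ea; apply: in_bagG ea xe.
  apply: connect_induced_sub (bag_subtree f _ _ fk fj) => a fa.
  exact: in_bagG fa xf.
- move=> i; apply: (leq_trans (leq_card_bigcup _ _)).
  apply: (@leq_trans (\sum_(e in bag D i) 2)).
    by apply: leq_sum => e _; exact: card_ends.
  by rewrite sum_nat_const; have := card_bag D i; lia.
Qed.

Lemma line_decomp_of_line_tw w H : tw_le (line_graph H) w -> inhabited (line_decomp w H).
Proof.
case=> I [t [bag [t_tree bag_cover bag_edge bag_conn bag_size]]].
constructor; apply: (@LineDecomp w H I t (ledge H) val bag) => //.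
- move=> e; case/existsP: (valP e) => x /existsP [y /andP [_ /eqP ->]].
  by rewrite cards2 ltnS leq_b1.
- move=> x y xy; exists (Sub [set x; y] (adj_is_edge xy)).
  by rewrite SubK !inE !eqxx orbT.
- move=> e f x xe xf; have [<-|neq_ef] := eqVneq e f.
    by have [i ei] := bag_cover e; exists i; rewrite ei.
  by apply: bag_edge; rewrite /= /line_adj neq_ef; apply/set0Pn; exists x; rewrite inE xe.
Qed.

Section HalfEdge.
Variables (w : nat) (G : sgraph) (D : line_decomp w G) (i0 : node D) (x : vtx G).
Hypothesis x_uncovered : x \notin covered D.

Definition half_ends (e : pedge D + unit) : {set vtx G} :=
  if e is inl e' then ends D e' else [set x].

Definition half_bag (i : node D + unit) : {set pedge D + unit} :=
  if i is inl i' then inl @: bag D i' else [set inr tt].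

Lemma mem_half_bag_inl i e :
  (inl e \in half_bag i) = if i is inl i' then e \in bag D i' else false.
Proof. by case: i => [i|[]]; rewrite /= ?inE // mem_imset //; apply: inl_inj. Qed.

Lemma mem_half_bag_inr i : (inr tt \in half_bag i) = ~~ is_inl i.
Proof. by case: i => [i|[]]; rewrite /= ?inE //; apply/imsetP => -[]. Qed.

Lemma x_notin_ends e : x \notin ends D e.
Proof. by apply: contra x_uncovered => xe; rewrite inE; apply/existsP; exists e. Qed.

Lemma half_bag_meet e f y : y \in half_ends e -> y \in half_ends f ->
  exists i, (e \in half_bag i) && (f \in half_bag i).
Proof.
case: e f => [e|[]] [f|[]] /=.
- by move=> ye yf; have [i eif] := bag_meet ye yf; exists (inl i); rewrite !mem_half_bag_inl.
- by move=> ye /set1P y_x; rewrite y_x (negPf (x_notin_ends e)) in ye.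
- by move=> /set1P ->; rewrite (negPf (x_notin_ends f)).
- by exists (inr tt); rewrite mem_half_bag_inr.
Qed.

Lemma half_bag_subtree e :
  subtree (link_rel (tree D) unit_rel i0 tt) (fun i => e \in half_bag i).
Proof.
case: e => [e|[]] [i|[]] [j|[]]; rewrite ?mem_half_bag_inl ?mem_half_bag_inr //= => ei ej.
apply: connect_homo (bag_subtree e _ _ ei ej) => a b /and3P [tab ea eb].
by apply/and3P; rewrite !mem_half_bag_inl.
Qed.

Definition half_edge_decomp : line_decomp w G.
Proof.
apply: (@LineDecomp w G _ _ _ half_ends half_bag (link_tree i0 tt (tree_is_tree D) unit_tree)).
- by case=> [e|[]]; rewrite /= ?cards1 ?card_ends.
- by move=> y z /(ends_adj D) [e yez]; exists (inl e).
- exact: half_bag_meet.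
- exact: half_bag_subtree.
- by case=> [i|[]] /=; rewrite ?cards1 // (leq_trans (leq_imset_card _ _)) ?card_bag.
Defined.

Lemma covered_half_edge : covered half_edge_decomp = x |: covered D.
Proof.
apply/setP => y; rewrite !inE; apply/existsP/idP => [[[e|[]]] /= ye|].
- by apply/orP; right; apply/existsP; exists e.
- by move/set1P: ye => ->; rewrite eqxx.
case/orP => [/eqP ->|/existsP [e ye]]; first by exists (inr tt); rewrite /= set11.
by exists (inl e).
Qed.

End HalfEdge.

(* Uncovered vertices are isolated; each gets a half-edge in a new leaf bag. *)
Lemma line_decomp_cover w G (D : line_decomp w G) :
  exists D' : line_decomp w G, covered D' = [set: vtx G].
Proof.
move: {2}#|~: covered D| (leqnn #|~: covered D|) => n.
elim: n D => [|n IH] D card_unc;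
  have [unc0|[x x_unc]] := set_0Vmem (~: covered D);
  try by exists D; rewrite -[covered D]setCK unc0 setC0.
  by rewrite (cardsD1 x) x_unc in card_unc.
have x_notin : x \notin covered D by rewrite inE in x_unc.
case: (tree_is_tree D) => /card_gt0P [i0 _] _ _ _ _.
apply: (IH (half_edge_decomp i0 x_notin)).
rewrite (cardsD1 x) x_unc add1n ltnS in card_unc.
by rewrite covered_half_edge setCU setIC -setDE.
Qed.

Lemma line_decomp_star w G (D : line_decomp w G) v x y z : nbhd3 v x y z ->
  exists ex ey ez i,
    [/\ ends D ex = [set v; x], ends D ey = [set v; y], ends D ez = [set v; z],
        uniq [:: ex; ey; ez] & [set ex; ey; ez] \subset bag D i].
Proof.
move=> nb; have [vx vy vz] := nbhd3_adj nb.
have edge_at a : adj G v a -> exists e, ends D e = [set v; a].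
  move=> va; have [e /andP [ve ae]] := ends_adj D va.
  by exists e; apply: card_le2_set2 (card_ends D e) ve ae (adj_neq va).
have [ex exE] := edge_at x vx; have [ey eyE] := edge_at y vy; have [ez ezE] := edge_at z vz.
have meet e f a b : ends D e = [set v; a] -> ends D f = [set v; b] ->
    exists i, (e \in bag D i) && (f \in bag D i).
  by move=> Ee Ef; apply: (bag_meet (x := v)); rewrite ?Ee ?Ef set21.
have [p /andP [exp eyp]] := meet _ _ _ _ exE eyE.
have [q /andP [exq ezq]] := meet _ _ _ _ exE ezE.
have [r /andP [eyr ezr]] := meet _ _ _ _ eyE ezE.
have [i /and3P [exi eyi ezi]] := subtree_helly (tree_is_tree D)
  (bag_subtree ex) (bag_subtree ey) (bag_subtree ez) exp eyp exq ezq eyr ezr.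
exists ex, ey, ez, i; split=> //; last first.
  by apply/subsetP => e; rewrite !inE => /orP [/orP [] |] /eqP ->.
have neq_edges e f a b : ends D e = [set v; a] -> ends D f = [set v; b] ->
    adj G v a -> a != b -> e != f.
  move=> Ee Ef va; apply: contra_neq => eq_ef.
  have : a \in [set v; b] by rewrite -Ef -eq_ef Ee set22.
  by rewrite !inE eq_sym (negPf (adj_neq va)) => /eqP.
case: nb => _; rewrite /= !inE !negb_or => /andP [/andP [xy xz] /andP [yz _]].
by rewrite (neq_edges _ _ _ _ exE eyE) ?(neq_edges _ _ _ _ exE ezE)
           ?(neq_edges _ _ _ _ eyE ezE).
Qed.

Section Gluing.
Variables (w : nat) (G1 G2 : sgraph) (D1 : line_decomp w G1) (D2 : line_decomp w G2).
Variables (v1 x1 y1 z1 : vtx G1) (v2 x2 y2 z2 : vtx G2).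
Variables (ex1 ey1 ez1 : pedge D1) (i1 : node D1) (ex2 ey2 ez2 : pedge D2) (i2 : node D2).
Hypotheses (ex1E : ends D1 ex1 = [set v1; x1]) (ey1E : ends D1 ey1 = [set v1; y1])
  (ez1E : ends D1 ez1 = [set v1; z1]) (uniq_e1 : uniq [:: ex1; ey1; ez1])
  (star1 : [set ex1; ey1; ez1] \subset bag D1 i1).
Hypotheses (ex2E : ends D2 ex2 = [set v2; x2]) (ey2E : ends D2 ey2 = [set v2; y2])
  (ez2E : ends D2 ez2 = [set v2; z2]) (uniq_e2 : uniq [:: ex2; ey2; ez2])
  (star2 : [set ex2; ey2; ez2] \subset bag D2 i2).

Local Notation BG := (bridge v1 v2 x1 y1 z1 x2 y2 z2).
Local Notation pedgeB := (pedge D1 + pedge D2)%type.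

(* v2x2, v2y2, v2z2 are identified with v1x1, v1y1, v1z1; once v1 and v2 are
   deleted, the merged pseudo-edges are the new edges x1x2, y1y2, z1z2. *)
Definition glue (f : pedge D2) : pedgeB :=
  if f == ex2 then inl ex1 else if f == ey2 then inl ey1
  else if f == ez2 then inl ez1 else inr f.

Definition unglue (u : pedgeB) : pedge D2 :=
  match u with
  | inl e => if e == ex1 then ex2 else if e == ey1 then ey2 else ez2
  | inr f => f
  end.

Lemma glueK : cancel glue unglue.
Proof.
move: uniq_e1; rewrite /= !inE !negb_or => /andP [/andP [nxy nxz] /andP [nyz _]].
move=> f; rewrite /glue; case: eqP => [->|_]; first by rewrite /= eqxx.
case: eqP => [->|_]; first by rewrite /= eq_sym (negPf nxy) eqxx.
by case: eqP => [->|_] //=; rewrite eq_sym (negPf nxz) eq_sym (negPf nyz).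
Qed.

Lemma glue_inj : injective glue. Proof. exact: can_inj glueK. Qed.

Lemma glue_star : [/\ glue ex2 = inl ex1, glue ey2 = inl ey1 & glue ez2 = inl ez1].
Proof.
move: uniq_e2; rewrite /= !inE !negb_or => /andP [/andP [nxy nxz] /andP [nyz _]].
by rewrite /glue !eqxx eq_sym (negPf nxy) eq_sym (negPf nxz) eq_sym (negPf nyz).
Qed.

Lemma glue_inl f e : glue f = inl e ->
  [/\ e \in bag D1 i1, f \in bag D2 i2,
      exists a, ends D1 e = [set v1; a] & exists b, ends D2 f = [set v2; b]].
Proof.
have in1 e' : e' \in [set ex1; ey1; ez1] -> e' \in bag D1 i1 by apply/subsetP.
have in2 f' : f' \in [set ex2; ey2; ez2] -> f' \in bag D2 i2 by apply/subsetP.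
rewrite /glue; case: eqP => [-> [<-]|_].
  by split; [apply: in1 | apply: in2 | exists x1 | exists x2]; rewrite ?inE ?eqxx.
case: eqP => [-> [<-]|_].
  by split; [apply: in1 | apply: in2 | exists y1 | exists y2]; rewrite ?inE ?eqxx ?orbT.
case: eqP => [-> [<-]|_] //.
by split; [apply: in1 | apply: in2 | exists z1 | exists z2]; rewrite ?inE ?eqxx ?orbT.
Qed.

Lemma glue_inr f f' : glue f = inr f' -> f' = f.
Proof. by rewrite /glue; do 3 case: eqP => // _; case. Qed.

Definition glued_ends (u : pedgeB) : {set vtx BG} :=
  [set p | match p with
           | inl a => [exists e, (u == inl e) && (val a \in ends D1 e)]
           | inr b => [exists f, (u == glue f) && (val b \in ends D2 f)]
           end].

Definition glued_bag (k : node D1 + node D2) : {set pedgeB} :=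
  match k with inl i => inl @: bag D1 i | inr j => glue @: bag D2 j end.

Lemma glued_ends_inlP a u :
  reflect (exists2 e, u = inl e & val a \in ends D1 e) (inl a \in glued_ends u).
Proof.
rewrite inE; apply: (iffP existsP) => [[e /andP [/eqP -> ae]]|[e -> ae]]; exists e => //.
by rewrite eqxx.
Qed.

Lemma glued_ends_inrP b u :
  reflect (exists2 f, u = glue f & val b \in ends D2 f) (inr b \in glued_ends u).
Proof.
rewrite inE; apply: (iffP existsP) => [[f /andP [/eqP -> bf]]|[f -> bf]]; exists f => //.
by rewrite eqxx.
Qed.

Lemma card_glued_ends_inr f : #|glued_ends (inr f)| <= 2.
Proof.
have right_only p : p \in glued_ends (inr f) -> exists2 b, p = inr b & val b \in ends D2 f.
  case: p => [a /glued_ends_inlP [] //|b /glued_ends_inrP [f' /esym/glue_inr <- bf]].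
  by exists b.
apply: leq_trans (card_ends D2 f).
apply: (leq_card_in_set (f := fun p : vtx BG => if p is inr b then val b else v2)).
  move=> p p' /right_only [b -> _] /right_only [b' -> _] /= eq_val.
  by congr inr; apply: val_inj.
by move=> p /right_only [b -> bf].
Qed.

Lemma card_glued_ends_inl e : #|glued_ends (inl e)| <= 2.
Proof.
have [/existsP [f /eqP glue_f]|no_glue] := boolP [exists f, glue f == inl e].
  have [_ _ [a0 Ee] [b0 Ef]] := glue_inl glue_f.
  apply: (@leq_trans #|[set: bool]|); last by rewrite cardsT card_bool.
  apply: (leq_card_in_set (f := fun p : vtx BG => if p is inl _ then true else false)) => //.
  case=> [a|b] [a'|b'] //.
    move=> /glued_ends_inlP [_ [<-] ae] /glued_ends_inlP [_ [<-] ae'] _.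
    rewrite Ee in ae ae'; congr inl; apply: val_inj.
    by rewrite (set2_other ae (valP a)) (set2_other ae' (valP a')).
  move=> /glued_ends_inrP [f1 f1E bf1] /glued_ends_inrP [f2 f2E bf2] _.
  rewrite -glue_f in f1E f2E; rewrite -(glue_inj f1E) Ef in bf1.
  rewrite -(glue_inj f2E) Ef in bf2; congr inr; apply: val_inj.
  by rewrite (set2_other bf1 (valP b)) (set2_other bf2 (valP b')).
have left_only p : p \in glued_ends (inl e) -> exists2 a, p = inl a & val a \in ends D1 e.
  case: p => [a /glued_ends_inlP [e' [<-] ae]|b /glued_ends_inrP [f glue_f _]].
    by exists a.
  by move: no_glue; rewrite negb_exists => /forallP /(_ f); rewrite -glue_f eqxx.
apply: leq_trans (card_ends D1 e).
apply: (leq_card_in_set (f := fun p : vtx BG => if p is inl a then val a else v1)).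
  move=> p p' /left_only [a -> _] /left_only [a' -> _] /= eq_val.
  by congr inl; apply: val_inj.
by move=> p /left_only [a -> ae].
Qed.

Lemma card_glued_ends u : #|glued_ends u| <= 2.
Proof. by case: u => [e|f]; [apply: card_glued_ends_inl | apply: card_glued_ends_inr]. Qed.

Lemma glued_ends_adj p q :
  adj BG p q -> exists u, (p \in glued_ends u) && (q \in glued_ends u).
Proof.
have crossing a b e f : ends D1 e = [set v1; val a] -> ends D2 f = [set v2; val b] ->
    glue f = inl e -> exists u, (inl a \in glued_ends u) && (inr b \in glued_ends u).
  move=> Ee Ef glue_f; exists (inl e); apply/andP; split.
    by apply/glued_ends_inlP; exists e; rewrite ?Ee ?set22.
  by apply/glued_ends_inrP; exists f; rewrite ?Ef ?set22.
have [gx gy gz] := glue_star.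
have cross_glued a b : cross x1 y1 z1 x2 y2 z2 (val a) (val b) ->
    exists u, (inl a \in glued_ends u) && (inr b \in glued_ends u).
  case/or3P=> /andP [/eqP a_eq /eqP b_eq]; apply: crossing; rewrite ?a_eq ?b_eq; eassumption.
case: p q => [a|b] [a'|b'] /=.
- case/(ends_adj D1) => e /andP [ae a'e]; exists (inl e).
  by apply/andP; split; apply/glued_ends_inlP; exists e.
- exact: cross_glued.
- by case/cross_glued => u /andP [a'u bu]; exists u; rewrite a'u bu.
- case/(ends_adj D2) => f /andP [bf b'f]; exists (glue f).
  by apply/andP; split; apply/glued_ends_inrP; exists f.
Qed.

Lemma glued_bag_meet u u' p : p \in glued_ends u -> p \in glued_ends u' ->
  exists k, (u \in glued_bag k) && (u' \in glued_bag k).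
Proof.
case: p => [a /glued_ends_inlP [e -> ae] /glued_ends_inlP [e' -> ae']|
            b /glued_ends_inrP [f -> bf] /glued_ends_inrP [f' -> bf']].
  by have [i /andP [ei e'i]] := bag_meet ae ae'; exists (inl i); rewrite /= !imset_f.
by have [j /andP [fj f'j]] := bag_meet bf bf'; exists (inr j); rewrite /= !imset_f.
Qed.

Local Notation treeB := (link_rel (tree D1) (tree D2) i1 i2).

Lemma glued_bag_subtree u : subtree treeB (fun k => u \in glued_bag k).
Proof.
pose R := induced_rel treeB (fun k => u \in glued_bag k).
have R_sym : connect_sym R.
  exact/sym_connect_sym/induced_rel_sym/link_rel_sym/tree_is_tree/tree_is_tree.
have lift_l e i i' : u = inl e -> e \in bag D1 i -> e \in bag D1 i' ->
    connect R (inl i) (inl i').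
  move=> u_e ei ei'; apply: connect_homo (bag_subtree e _ _ ei ei') => a b /and3P [tab ea eb].
  by apply/and3P; split; rewrite //= u_e imset_f.
have lift_r f j j' : u = glue f -> f \in bag D2 j -> f \in bag D2 j' ->
    connect R (inr j) (inr j').
  move=> u_f fj fj'; apply: connect_homo (bag_subtree f _ _ fj fj') => a b /and3P [tab fa fb].
  by apply/and3P; split; rewrite //= u_f imset_f.
have left_right i j : u \in glued_bag (inl i) -> u \in glued_bag (inr j) ->
    connect R (inl i) (inr j).
  move=> /imsetP [e ei u_e] /imsetP [f fj u_f].
  have [e_i1 f_i2 _ _] := glue_inl (etrans (esym u_f) u_e).
  apply: connect_trans (lift_l e _ _ u_e ei e_i1) _.
  apply: connect_trans (lift_r f _ _ u_f f_i2 fj).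
  apply: connect1; apply/and3P.
  by split; [rewrite /= !eqxx | rewrite /= u_e imset_f | rewrite /= u_f imset_f].
case=> [i|j] [i'|j'] uk uk'.
- case/imsetP: uk => e ei u_e; case/imsetP: uk' => e' ei' u_e'.
  have eq_e : e' = e by move: u_e'; rewrite u_e => -[->].
  by rewrite eq_e in ei'; apply: (lift_l _ _ _ u_e ei ei').
- exact: left_right.
- by rewrite R_sym; apply: left_right.
- case/imsetP: uk => f fj u_f; case/imsetP: uk' => f' fj' u_f'.
  have eq_f : f' = f by apply: glue_inj; rewrite -u_f -u_f'.
  by rewrite eq_f in fj'; apply: (lift_r _ _ _ u_f fj fj').
Qed.

Definition glued_decomp : line_decomp w BG.
Proof.
apply: (@LineDecomp w BG _ _ _ glued_ends glued_bag
          (link_tree i1 i2 (tree_is_tree D1) (tree_is_tree D2))).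
- exact: card_glued_ends.
- exact: glued_ends_adj.
- exact: glued_bag_meet.
- exact: glued_bag_subtree.
- by case=> [i|j]; apply: leq_trans (leq_imset_card _ _) (card_bag _ _).
Defined.

End Gluing.

Lemma line_decomp_bridge w G1 G2 (D1 : line_decomp w G1) (D2 : line_decomp w G2)
    (v1 : vtx G1) (v2 : vtx G2) (x1 y1 z1 : vtx G1) (x2 y2 z2 : vtx G2) :
  nbhd3 v1 x1 y1 z1 -> nbhd3 v2 x2 y2 z2 ->
  inhabited (line_decomp w (bridge v1 v2 x1 y1 z1 x2 y2 z2)).
Proof.
move=> /(line_decomp_star D1) [ex1 [ey1 [ez1 [i1 [ex1E ey1E ez1E uniq1 star1]]]]].
move=> /(line_decomp_star D2) [ex2 [ey2 [ez2 [i2 [ex2E ey2E ez2E uniq2 star2]]]]].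
by constructor; exact: glued_decomp ex1E ey1E ez1E uniq1 star1 ex2E ey2E ez2E uniq2 star2.
Qed.

Unset Implicit Arguments.

Theorem theorem14 (w : nat) (B : sgraph -> Prop)
  (hB : forall H : sgraph, B H -> tw_le (line_graph H) w)
  (G : sgraph) (hG : bridge_closure B G) :
  tw_le G (2 * w + 1).
Proof.
have [D] : inhabited (line_decomp w G).
  elim: hG => [H /hB /line_decomp_of_line_tw //|] G1 G2 v1 v2 x1 y1 z1 x2 y2 z2 _ [D1] _ [D2].
  exact: line_decomp_bridge.
have [D' D'_cover] := line_decomp_cover D.
exact: line_decomp_tw D'_cover.
Qed.
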